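(* Let $H$ be a finite-dimensional Hopf algebra over a field $k$, $R\subseteq H$ a Hopf subalgebra, $Q=H/R^+H$, and let $\ell_Q$ be the stage at which the descending chain of annihilator ideals $\mathrm{Ann}\,Q\supseteq\mathrm{Ann}\,Q^{\otimes 2}\supseteq\cdots$ stabilizes. Then $\sigma[Q^{\otimes \ell_Q}]=\sigma[Q^{\otimes(\ell_Q+n)}]$ for all $n\in\mathbb{N}$.
   Context: $R^+=\ker\varepsilon\cap R$ and $Q=H/R^+H$ is a right $H$-module. $Q^{\otimes n}$ denotes the $n$-fold tensor power in mod-$H$ (tensor over $k$ with diagonal action $(m\otimes n)h=mh_{(1)}\otimes nh_{(2)}$). $\mathrm{Ann}\,M=\{h\in H:Mh=0\}$. $\ell_Q$ is the least $n\ge1$ with $\mathrm{Ann}\,Q^{\otimes n}=\mathrm{Ann}\,Q^{\otimes m}$ for all $m\ge n$. For a module $M$ over a finite-dimensional algebra $C$, $\sigma[M]$ is the full subcategory of mod-$C$ whose objects are submodules of quotients of finite direct sums of copies of $M$. *)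

(* Finite-dimensional Hopf algebras, encoded as a finite-dimensional
   k-algebra H (falgType) with comultiplication given in coordinates w.r.t. the
   canonical basis (vbasis fullv) of H: an element of H (x) H is a dim H x dim H
   matrix T, standing for \sum_{a,b} T a b e_a (x) e_b. *)
From HB Require Import structures.
From mathcomp Require Import all_boot all_order all_algebra all_field.
From mathcomp Require Import mxtens.
Set Implicit Arguments. Unset Strict Implicit. Unset Printing Implicit Defensive.
Import Order.TTheory GRing.Theory Num.Theory.
Local Open Scope ring_scope.

Section Hopf.
Variables (k : fieldType) (H : falgType k).

Definition dimH : nat := \dim (fullv : {vspace H}).
Definition hb (i : 'I_dimH) : H := tnth (vbasis (fullv : {vspace H})) i.
Definition hc (i : 'I_dimH) (x : H) : k := coord (vbasis (fullv : {vspace H})) i x.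

Definition tens (x y : H) : 'M[k]_dimH := \matrix_(a, b) (hc a x * hc b y).
Definition mulT (X Y : 'M[k]_dimH) : 'M[k]_dimH :=
  \sum_(a < dimH) \sum_(b < dimH) \sum_(c < dimH) \sum_(d < dimH)
     (X a b * Y c d) *: tens (hb a * hb c) (hb b * hb d).

Record is_hopf (Delta : H -> 'M[k]_dimH) (eps : H -> k) (S : H -> H) : Prop := {
  hopf_Delta_lin : linear Delta;
  hopf_eps_lin : forall (a : k) (x y : H), eps (a *: x + y) = a * eps x + eps y;
  hopf_S_lin : linear S;
  hopf_coassoc : forall (h : H) (c d b : 'I_dimH),
     \sum_(a < dimH) Delta h a b * Delta (hb a) c d
   = \sum_(a < dimH) Delta h c a * Delta (hb a) d b;
  hopf_counit_l : forall h : H,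
     \sum_(a < dimH) \sum_(b < dimH) (Delta h a b * eps (hb a)) *: hb b = h;
  hopf_counit_r : forall h : H,
     \sum_(a < dimH) \sum_(b < dimH) (Delta h a b * eps (hb b)) *: hb a = h;
  hopf_Delta_mul : forall x y : H, Delta (x * y) = mulT (Delta x) (Delta y);
  hopf_Delta_1 : Delta 1 = tens 1 1;
  hopf_eps_mul : forall x y : H, eps (x * y) = eps x * eps y;
  hopf_eps_1 : eps 1 = 1;
  hopf_antipode_l : forall h : H,
     \sum_(a < dimH) \sum_(b < dimH) Delta h a b *: (S (hb a) * hb b) = eps h *: 1;
  hopf_antipode_r : forall h : H,
     \sum_(a < dimH) \sum_(b < dimH) Delta h a b *: (hb a * S (hb b)) = eps h *: 1
}.

Definition is_hopf_subalg (Delta : H -> 'M[k]_dimH) (S : H -> H)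
    (R : {vspace H}) : Prop :=
  [/\ 1 \in R,
      (forall x y, x \in R -> y \in R -> x * y \in R),
      (forall x, x \in R -> exists C : 'M[k]_(\dim R),
          Delta x = \sum_(i < \dim R) \sum_(j < \dim R)
                      C i j *: tens (tnth (vbasis R) i) (tnth (vbasis R) j))
    & (forall x, x \in R -> S x \in R)].

Definition in_RplusH (eps : H -> k) (R : {vspace H}) (h : H) : Prop :=
  exists (m : nat) (r s : 'I_m -> H),
    (forall i, r i \in R /\ eps (r i) = 0) /\ h = \sum_(i < m) r i * s i.

(* a right H-module structure on row vectors k^m: v . h = v *m rho h *)
Definition is_rmod (m : nat) (rho : H -> 'M[k]_m) : Prop :=
  [/\ linear rho, rho 1 = 1%:M & forall x y, rho (x * y) = rho x *m rho y].

Definition tens_rmod (Delta : H -> 'M[k]_dimH) (m p : nat)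
   (rhoV : H -> 'M[k]_m) (rhoW : H -> 'M[k]_p) (h : H) : 'M[k]_(m * p) :=
  \sum_(a < dimH) \sum_(b < dimH) Delta h a b *: tensmx (rhoV (hb a)) (rhoW (hb b)).

Fixpoint tpow (Delta : H -> 'M[k]_dimH) (eps : H -> k) (q : nat)
    (rho : H -> 'M[k]_q) (n : nat) : H -> 'M[k]_(q ^ n) :=
  match n return H -> 'M[k]_(q ^ n) with
  | 0 => fun h => (eps h)%:M
  | n'.+1 => fun h => castmx (esym (expnS q n'), esym (expnS q n'))
                 (tens_rmod Delta rho (tpow Delta eps rho n') h)
  end.

Definition same_ann (m p : nat) (rho1 : H -> 'M[k]_m) (rho2 : H -> 'M[k]_p) : Prop :=
  forall h : H, rho1 h = 0 <-> rho2 h = 0.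

Definition dsum_rmod (m : nat) (rho : H -> 'M[k]_m) (r : nat) (h : H) : 'M[k]_(r * m) :=
  tensmx (1%:M : 'M[k]_r) (rho h).

Definition is_submod (m : nat) (rho : H -> 'M[k]_m) (X : 'M[k]_m) : Prop :=
  forall h : H, (X *m rho h <= X)%MS.

(* N belongs to sigma[M]: N is isomorphic to X / Y for submodules Y <= X of M^r,
   the isomorphism X/Y ~ N being induced by the linear map F restricted to X *)
Definition in_sigma (m : nat) (rhoM : H -> 'M[k]_m) (p : nat) (rhoN : H -> 'M[k]_p)
  : Prop :=
  exists (r : nat) (X Y : 'M[k]_(r * m)) (F : 'M[k]_(r * m, p)),
    [/\ is_submod (dsum_rmod rhoM r) X /\ is_submod (dsum_rmod rhoM r) Y,
        (Y <= X)%MS,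
        (forall v : 'rV[k]_(r * m), (v <= X)%MS ->
            (v *m F == 0 <-> (v <= Y)%MS)),
        (1%:M <= X *m F)%MS
      & (forall (v : 'rV[k]_(r * m)) (h : H), (v <= X)%MS ->
            v *m dsum_rmod rhoM r h *m F = v *m F *m rhoN h)].

Definition same_sigma (m1 m2 : nat) (rho1 : H -> 'M[k]_m1) (rho2 : H -> 'M[k]_m2)
  : Prop :=
  forall (p : nat) (rhoN : H -> 'M[k]_p), is_rmod rhoN ->
    (in_sigma rho1 rhoN <-> in_sigma rho2 rhoN).

End Hopf.

From HB Require Import structures.
From mathcomp Require Import all_boot all_order all_algebra all_field.
From mathcomp Require Import mxtens.
Import GRing.Theory.
Set Implicit Arguments. Unset Strict Implicit. Unset Printing Implicit Defensive.
Local Open Scope ring_scope.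

(* Over a finite-dimensional algebra H, sigma[M] only depends on Ann M: N lies
   in sigma[M] iff Ann M <= Ann N.  Indeed a p-dimensional N is a quotient of
   H^p, through a map that factors through (H / Ann M)^p, and H / Ann M embeds
   into M^(dim M) via y |-> (rows of the matrix of y acting on M); so N is a
   subquotient of M^(p dim M).  The tensor powers of Q are H-modules whose
   annihilators all agree from l_Q on, hence so do their categories sigma. *)

Lemma linear_sumZ (R : pzRingType) (U V : lmodType R) (f : U -> V) :
  linear f -> forall (I : Type) (r : seq I) (c : I -> R) (z : I -> U),
  f (\sum_(i <- r) c i *: z i) = \sum_(i <- r) c i *: f (z i).
Proof.
move=> lin_f I r c z.
pose fL : {linear U -> V} := HB.pack f (GRing.isLinear.Build _ _ _ _ f lin_f).
change (fL (\sum_(i <- r) c i *: z i) = \sum_(i <- r) c i *: fL (z i)).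
by rewrite linear_sum; apply: eq_bigr => i _; rewrite linearZ.
Qed.

Section Coordinates.
Variables (k : fieldType) (H : falgType k).
Local Notation d := (dimH H).

Lemma linear_hc_expand (V : lmodType k) (f : H -> V) :
  linear f -> forall u, f u = \sum_(a < d) hc a u *: f (hb a).
Proof.
move=> lin_f u; rewrite {1}(coord_vbasis (memvf u)) linear_sumZ //.
by apply: eq_bigr => a _; rewrite /hb /hc (tnth_nth 0).
Qed.

Lemma big_mxtens_index (V : nmodType) (p n : nat) (G : 'I_(p * n) -> V) :
  \sum_(i < p * n) G i = \sum_(j < p) \sum_(a < n) G (mxtens_index (j, a)).
Proof.
rewrite pair_big; apply: reindex => /=.
exists (@mxtens_unindex p n) => i _; last exact: mxtens_unindexK.
by case: i => j a; rewrite mxtens_indexK.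
Qed.

(* Row vectors of length p * dim H encode p-tuples of elements of H: hcomp u j
   is the j-th entry, and hcoord j y the tuple with y at j and 0 elsewhere. *)
Definition hcomp (p : nat) (u : 'rV[k]_(p * d)) (j : 'I_p) : H :=
  \sum_(a < d) u 0 (mxtens_index (j, a)) *: hb a.

Definition hcoord (p : nat) (j : 'I_p) (y : H) : 'rV[k]_(p * d) :=
  \sum_(a < d) hc a y *: delta_mx 0 (mxtens_index (j, a)).

Definition gen_mx (p c : nat) (f : 'I_p -> H -> 'rV[k]_c) : 'M[k]_(p * d, c) :=
  \matrix_i f (mxtens_unindex i).1 (hb (mxtens_unindex i).2).

Variables (p c : nat) (f : 'I_p -> H -> 'rV[k]_c).
Hypothesis lin_f : forall j, linear (f j).

Lemma row_gen_mx j a : row (mxtens_index (j, a)) (gen_mx f) = f j (hb a).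
Proof. by rewrite rowK mxtens_indexK. Qed.

Lemma mul_hcoord_gen_mx j y : hcoord j y *m gen_mx f = f j y.
Proof.
rewrite mulmx_suml (linear_hc_expand (lin_f j) y); apply: eq_bigr => a _.
by rewrite -scalemxAl -rowE row_gen_mx.
Qed.

Lemma mul_gen_mx u : u *m gen_mx f = \sum_(j < p) f j (hcomp u j).
Proof.
rewrite mulmx_sum_row big_mxtens_index; apply: eq_bigr => j _.
by rewrite linear_sumZ //; apply: eq_bigr => a _; rewrite row_gen_mx.
Qed.

End Coordinates.

Lemma tensmx1 (k : fieldType) (m n : nat) :
  tensmx (1%:M : 'M[k]_m) (1%:M : 'M[k]_n) = 1%:M.
Proof.
apply/matrixP => i j.
case: (mxtens_indexP i) => i1 i2; case: (mxtens_indexP j) => j1 j2.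
rewrite tensmxE !mxE (inj_eq (can_inj (@mxtens_indexK _ _))) xpair_eqE.
by case: (i1 == j1); case: (i2 == j2); rewrite ?mul1r ?mul0r.
Qed.

Section TensorModule.
Variables (k : fieldType) (H : falgType k) (m n : nat).
Variables (rhoV : H -> 'M[k]_m) (rhoW : H -> 'M[k]_n).
Local Notation d := (dimH H).

Definition tens_act (T : 'M[k]_d) : 'M[k]_(m * n) :=
  \sum_(a < d) \sum_(b < d) T a b *: tensmx (rhoV (hb a)) (rhoW (hb b)).

Fact tens_act_is_linear : linear tens_act.
Proof.
move=> c T T'; rewrite /tens_act scaler_sumr -big_split; apply: eq_bigr => a _.
rewrite scaler_sumr -big_split; apply: eq_bigr => b _.
by rewrite !mxE scalerDl scalerA.
Qed.

HB.instance Definition _ :=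
  GRing.isLinear.Build k 'M[k]_d 'M[k]_(m * n) _ tens_act tens_act_is_linear.

Hypotheses (hV : is_rmod rhoV) (hW : is_rmod rhoW).

Lemma tens_act_tens u w : tens_act (tens u w) = tensmx (rhoV u) (rhoW w).
Proof.
have [[linV _ _] [linW _ _]] := (hV, hW).
apply/matrixP => i j; rewrite (linear_hc_expand linV u) (linear_hc_expand linW w).
rewrite !mxE !summxE mulr_suml; apply: eq_bigr => a _.
rewrite !summxE mulr_sumr; apply: eq_bigr => b _.
by rewrite !mxE mulrACA.
Qed.

Lemma tens_act_mulT X Y : tens_act (mulT X Y) = tens_act X *m tens_act Y.
Proof.
have [[_ _ mulV] [_ _ mulW]] := (hV, hW).
rewrite /mulT linear_sum mulmx_suml; apply: eq_bigr => a _.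
rewrite linear_sum mulmx_suml; apply: eq_bigr => b _.
rewrite -scalemxAl mulmx_sumr scaler_sumr linear_sum; apply: eq_bigr => c _.
rewrite linear_sum mulmx_sumr scaler_sumr; apply: eq_bigr => e _.
by rewrite linearZ /= tens_act_tens mulV mulW -tensmx_mul -scalemxAr scalerA.
Qed.

Lemma tens_rmod_rmod (Delta : H -> 'M[k]_d) :
    linear Delta -> (forall x y, Delta (x * y) = mulT (Delta x) (Delta y)) ->
    Delta 1 = tens 1 1 -> is_rmod (tens_rmod Delta rhoV rhoW).
Proof.
move=> linD mulD oneD; have [[_ oneV _] [_ oneW _]] := (hV, hW).
have tens_rmodE h : tens_rmod Delta rhoV rhoW h = tens_act (Delta h) by [].
split.
- by move=> c x y; rewrite !tens_rmodE linD linearP.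
- by rewrite tens_rmodE oneD tens_act_tens oneV oneW tensmx1.
- by move=> x y; rewrite !tens_rmodE mulD tens_act_mulT.
Qed.

End TensorModule.

Section TensorPowers.
Variables (k : fieldType) (H : falgType k).

Lemma castmx_rmod (a b : nat) (e : a = b) (rho : H -> 'M[k]_a) :
  is_rmod rho -> is_rmod (fun h => castmx (e, e) (rho h)).
Proof.
case: b / e => -[linr oner mulr].
by split => [c x y||x y]; rewrite !castmx_id ?linr ?mulr.
Qed.

Lemma scalar_mx_rmod (chi : H -> k) :
  scalar chi -> (forall x y, chi (x * y) = chi x * chi y) -> chi 1 = 1 ->
  is_rmod (fun h => (chi h)%:M : 'M[k]_1).
Proof.
move=> lin_chi mul_chi one_chi; split => [c x y||x y].
- by rewrite lin_chi raddfD /= scale_scalar_mx.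
- by rewrite one_chi.
- by rewrite mul_chi scalar_mxM.
Qed.

Lemma tpow_rmod (Delta : H -> 'M[k]_(dimH H)) (eps : H -> k) (S : H -> H)
    (q : nat) (rho : H -> 'M[k]_q) :
  is_hopf Delta eps S -> is_rmod rho -> forall n, is_rmod (tpow Delta eps rho n).
Proof.
case=> linD lin_eps _ _ _ _ mulD oneD mul_eps one_eps _ _ hrho.
elim=> [|n IHn]; first exact: scalar_mx_rmod.
exact: castmx_rmod (tens_rmod_rmod hrho IHn linD mulD oneD).
Qed.

End TensorPowers.

Section Sigma.
Variables (k : fieldType) (H : falgType k) (m p : nat).
Variables (rho : H -> 'M[k]_m) (rhoN : H -> 'M[k]_p).

Lemma in_sigma_ann : in_sigma rho rhoN -> forall h, rho h = 0 -> rhoN h = 0.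
Proof.
move=> [r [X [Y [F [_ _ _ fullXF actF]]]]] h rho_h0.
apply/row_matrixP => j; rewrite row0 rowE.
have /submxP [w] := submx_trans (row_sub j 1%:M) fullXF; rewrite row1 => ->.
rewrite !mulmxA -actF ?submxMl //.
by rewrite /dsum_rmod rho_h0 tensmx0 mulmx0 mul0mx.
Qed.

Section Presentation.
Variables (r n : nat) (P : 'M[k]_(n, r * m)) (Psi : 'M[k]_(n, p)).

(* N is presented as the quotient of the span of the rows of P in M^r by the
   map sending row i of P to row i of Psi. *)
Hypotheses (kerP : forall u : 'rV_n, u *m P = 0 -> u *m Psi = 0)
  (Psi_full : (1%:M <= Psi)%MS)
  (P_act : forall i h, exists2 w : 'rV_n,
     row i P *m dsum_rmod rho r h = w *m P & row i Psi *m rhoN h = w *m Psi).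

Local Notation F := (pinvmx P *m Psi).

Lemma mul_pinvmx_presentation (u : 'rV_n) : u *m P *m F = u *m Psi.
Proof.
have : (u *m P *m pinvmx P - u) *m P = 0.
  by rewrite mulmxBl mulmxKpV ?submxMl // subrr.
move/kerP/eqP; rewrite mulmxBl subr_eq0 => /eqP <-.
by rewrite !mulmxA.
Qed.

Lemma presentation_act (v : 'rV_(r * m)) h : (v <= P)%MS ->
  v *m dsum_rmod rho r h *m F = v *m F *m rhoN h.
Proof.
case/submxP => u ->; rewrite [u *m P]mulmx_sum_row !mulmx_suml.
apply: eq_bigr => i _.
have [w Pw Psiw] := P_act i h.
rewrite -!scalemxAl Pw mul_pinvmx_presentation -Psiw.
by rewrite [row i P]rowE mul_pinvmx_presentation -rowE.
Qed.

Lemma in_sigma_presentation : in_sigma rho rhoN.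
Proof.
have subP : is_submod (dsum_rmod rho r) <<P>>%MS.
  move=> h; rewrite (eqmxMr _ (genmxE P)) genmxE.
  apply/row_subP => i; rewrite row_mul.
  by have [w -> _] := P_act i h; apply: submxMl.
exists r, <<P>>%MS, (<<P>> :&: kermx F)%MS, F; split.
- split=> // h; apply/row_subP => i; rewrite row_mul.
  have := row_sub i (<<P>> :&: kermx F)%MS; rewrite sub_capmx sub_kermx.
  case/andP => iP iF; rewrite sub_capmx sub_kermx.
  rewrite (submx_trans (submxMr _ iP) (subP h)) /=.
  by rewrite presentation_act -?(genmxE P) // (eqP iF) mul0mx.
- exact: capmxSl.
- by move=> v vP; rewrite sub_capmx vP sub_kermx.
- rewrite (eqmxMr _ (genmxE P)).
  suff -> : P *m F = Psi by [].
  by apply/row_matrixP => i; rewrite row_mul rowE mul_pinvmx_presentation -rowE.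
- by move=> v h; rewrite genmxE; apply: presentation_act.
Qed.

End Presentation.

Hypotheses (hrho : is_rmod rho) (hN : is_rmod rhoN).

Local Notation r := (p * m)%N.

Definition rho_block (j : 'I_p) (y : H) : 'rV[k]_(r * m) :=
  \sum_(t < m)
    tensmx (delta_mx 0 (mxtens_index (j, t)) : 'rV[k]_r) (row t (rho y)).

Lemma rho_block_is_linear j : linear (rho_block j).
Proof.
have [linr _ _] := hrho.
move=> c x y; apply/matrixP => i s; rewrite !mxE !summxE big_distrr -big_split.
by apply: eq_bigr => t _; rewrite !mxE linr !mxE mulrDr mulrCA.
Qed.

Lemma rho_block_mul j y h :
  rho_block j y *m dsum_rmod rho r h = rho_block j (y * h).
Proof.
have [_ _ mulr] := hrho.
rewrite /dsum_rmod mulmx_suml; apply: eq_bigr => t _.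
have := tensmx_mul (delta_mx 0 (mxtens_index (j, t)) : 'rV[k]_r)
  (row t (rho y)) 1%:M (rho h).
by rewrite mulmx1 -row_mul -mulr.
Qed.

Lemma sum_rho_block_entry (y : 'I_p -> H) j t s :
  (\sum_(j' < p) rho_block j' (y j')) 0 (mxtens_index (mxtens_index (j, t), s))
  = rho (y j) t s.
Proof.
have index_eq (a b : 'I_p * 'I_m) : (mxtens_index a == mxtens_index b) = (a == b).
  by rewrite (inj_eq (can_inj (@mxtens_indexK _ _))).
rewrite summxE (bigD1 j) //= big1 ?addr0 => [|j' j'j].
  rewrite summxE (bigD1 t) //= big1 ?addr0 => [|t' t't].
    by rewrite !mxE mxtens_indexK /= eqxx mul1r.
  rewrite !mxE mxtens_indexK /= index_eq xpair_eqE eqxx /=.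
  by rewrite eq_sym (negbTE t't) mul0r.
rewrite summxE big1 // => t' _.
by rewrite !mxE mxtens_indexK /= index_eq xpair_eqE eq_sym (negbTE j'j) mul0r.
Qed.

Hypothesis ann : forall h, rho h = 0 -> rhoN h = 0.

Lemma ann_sub_in_sigma : in_sigma rho rhoN.
Proof.
have [linN oneN mulN] := hN.
pose act j y : 'rV[k]_p := delta_mx 0 j *m rhoN y.
have lin_act j : linear (act j).
  by move=> c x y; rewrite /act linN mulmxDr scalemxAr.
apply: (@in_sigma_presentation r _ (gen_mx rho_block) (gen_mx act)).
- move=> u; rewrite (mul_gen_mx rho_block_is_linear) (mul_gen_mx lin_act).
  move=> block0; apply: big1 => j _.
  rewrite /act; suff -> : rhoN (hcomp u j) = 0 by rewrite mulmx0.
  apply: ann; apply/matrixP => t s.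
  by rewrite -(sum_rho_block_entry (hcomp u)) block0 !mxE.
- apply/row_subP => j; rewrite row1 -[delta_mx 0 j]mulmx1 -oneN.
  by rewrite -/(act j 1) -(mul_hcoord_gen_mx lin_act) submxMl.
- move=> i h; case: (mxtens_indexP i) => j a.
  exists (hcoord j (hb a * h)); rewrite !row_gen_mx.
    by rewrite (mul_hcoord_gen_mx rho_block_is_linear) rho_block_mul.
  by rewrite (mul_hcoord_gen_mx lin_act) /act mulN mulmxA.
Qed.

End Sigma.

Lemma same_sigma_of_same_ann (k : fieldType) (H : falgType k) (m1 m2 : nat)
    (rho1 : H -> 'M[k]_m1) (rho2 : H -> 'M[k]_m2) :
  is_rmod rho1 -> is_rmod rho2 -> same_ann rho1 rho2 -> same_sigma rho1 rho2.
Proof.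
move=> h1 h2 ann12 p rhoN hN.
by split=> sigmaN; apply: ann_sub_in_sigma => // h /ann12; apply: in_sigma_ann.
Qed.

Theorem mainTheorem12
  (k : fieldType) (H : falgType k)
  (Delta : H -> 'M[k]_(dimH H)) (eps : H -> k) (S : H -> H)
  (hH : is_hopf Delta eps S)
  (R : {vspace H}) (hR : is_hopf_subalg Delta S R)
  (* Q = H / R^+ H, given as a right H-module on k^q with the projection pi *)
  (q : nat) (rhoQ : H -> 'M[k]_q) (hQ : is_rmod rhoQ)
  (pi : H -> 'rV[k]_q) (pi_lin : linear pi)
  (pi_hom : forall x h : H, pi (x * h) = pi x *m rhoQ h)
  (pi_surj : forall v : 'rV[k]_q, exists h : H, pi h = v)
  (pi_ker : forall h : H, pi h = 0 <-> in_RplusH eps R h)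
  (* l = l_Q: the least l >= 1 from which Ann Q^{(x) m} is constant *)
  (l : nat) (l_ge1 : (1 <= l)%N)
  (l_stab : forall m : nat, (l <= m)%N ->
     same_ann (tpow Delta eps rhoQ l) (tpow Delta eps rhoQ m))
  (l_min : forall n : nat, (1 <= n)%N ->
     (forall m : nat, (n <= m)%N ->
        same_ann (tpow Delta eps rhoQ n) (tpow Delta eps rhoQ m)) ->
     (l <= n)%N) :
  forall n : nat,
    same_sigma (tpow Delta eps rhoQ l) (tpow Delta eps rhoQ (l + n)).
Proof.
move=> n; have tpowQ := tpow_rmod hH hQ.
apply: same_sigma_of_same_ann; [exact: tpowQ | exact: tpowQ |].
exact: l_stab (leq_addr n l).
Qed.
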